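(* Let $q$ be a primitive $n$-th root of unity. The Fourier transform $\mathcal F:{\mathfrak c}_q[SL_2]\to{\mathfrak u}_q(sl_2)$, $\mathcal F(h)=\sum_a\big(\int e_ah\big)f^a$, is invertible and given by $$\mathcal F(X^\alpha t^\beta Y^\gamma)=\sum_{l=0}^{n-1}\frac{q^{-(l+\alpha)(1-\beta)+\beta(n-1-\gamma)}}{n\,[n-1-\alpha]_{q^{-1}}!\,[n-1-\gamma]_q!}\,F^{n-1-\alpha}K^lE^{n-1-\gamma}$$ for $0\le\alpha,\beta,\gamma\le n-1$.
   Context: ${\mathfrak c}_q[SL_2]$ is the Hopf algebra generated by $X,t,Y$ with $X^n=Y^n=0$, $t^n=1$, $YX=XY$, $Xt=qtX$, $Yt=qtY$, $\Delta t=q\sum_{a=0}^{n-2}(q-1)^{a-1}(1-q^{-a-1})tY^a\otimes X^at$, $\Delta X=X\otimes1+\sum_{a=0}^{n-2}(q-1)^atY^a\otimes X^{a+1}$, $\Delta Y=1\otimes Y+\sum_{a=0}^{n-2}(1-q^{-1})^aY^{a+1}\otimes X^at$. ${\mathfrak u}_q(sl_2)$ is the Hopf algebra generated by $E,F,K$ with $E^n=F^n=0$, $K^n=1$, $KEK^{-1}=q^{-1}E$, $KFK^{-1}=qF$, $EF-FE=K-K^{-1}$, $\Delta K=K\otimes K$, $\Delta F=F\otimes1+K^{-1}\otimes F$, $\Delta E=E\otimes K+1\otimes E$. The two are dually paired by the Hopf pairing with $\langle X^it^jY^k,F^{i'}K^{j'}E^{k'}\rangle=\delta_{ii'}\delta_{kk'}q^{jj'}[i]_{q^{-1}}![k]_q!$,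 which identifies ${\mathfrak u}_q(sl_2)$ with the dual of ${\mathfrak c}_q[SL_2]$; $\{e_a\}$ is any basis of ${\mathfrak c}_q[SL_2]$ and $\{f^a\}$ the dual basis in ${\mathfrak u}_q(sl_2)$. $\int$ is the right integral on ${\mathfrak c}_q[SL_2]$ given on the basis by $\int X^\alpha t^\beta Y^\gamma=1$ if $\alpha=\gamma=n-1$, $\beta=1$, and $0$ otherwise. $[i]_q=(1-q^i)/(1-q)$, $[i]_q!=[i]_q\cdots[1]_q$. *)

From HB Require Import structures.
From mathcomp Require Import all_boot all_order all_algebra.
From mathcomp Require Import falgebra.
Set Implicit Arguments. Unset Strict Implicit. Unset Printing Implicit Defensive.
Import Order.TTheory GRing.Theory Num.Theory.
Local Open Scope ring_scope.

Notation idx n := ('I_n * 'I_n * 'I_n)%type.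

Definition qint (R : fieldType) (i : nat) (z : R) : R := (1 - z ^+ i) / (1 - z).
Definition qfact (R : fieldType) (i : nat) (z : R) : R :=
  \prod_(1 <= k < i.+1) qint k z.

Definition cmon (R : fieldType) (A : falgType R) (X t Y : A) (i j k : nat) : A :=
  X ^+ i * t ^+ j * Y ^+ k.
Definition umon (R : fieldType) (U : falgType R) (F K E : U) (i j k : nat) : U :=
  F ^+ i * K ^+ j * E ^+ k.

Definition cq_rels (R : fieldType) (n : nat) (q : R) (A : falgType R) (X t Y : A) :=
  [/\ X ^+ n = 0, Y ^+ n = 0, t ^+ n = 1 & Y * X = X * Y] /\
  (X * t = q *: (t * X) /\ Y * t = q *: (t * Y)).

Definition cq_pbw (R : fieldType) (n : nat) (A : falgType R) (X t Y : A) :=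
  basis_of fullv [seq cmon X t Y a.1.1 a.1.2 a.2 | a : idx n].

Definition uq_rels (R : fieldType) (n : nat) (q : R) (U : falgType R) (E F K : U) :=
  [/\ E ^+ n = 0, F ^+ n = 0 & K ^+ n = 1] /\
  [/\ K * E * K^-1 = q^-1 *: E, K * F * K^-1 = q *: F &
      E * F - F * E = K - K^-1].

Definition uq_pbw (R : fieldType) (n : nat) (U : falgType R) (E F K : U) :=
  basis_of fullv [seq umon F K E a.1.1 a.1.2 a.2 | a : idx n].

Definition is_cq_integral (R : fieldType) (n : nat) (A : falgType R) (X t Y : A)
    (intg : A -> R) :=
  (forall (c : R) (x y : A), intg (c *: x + y) = c * intg x + intg y) /\
  (forall a b c : 'I_n, intg (cmon X t Y a b c) =
     if [&& (a == n.-1 :> nat), (b == 1 :> nat) & (c == n.-1 :> nat)] then 1 else 0).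

Definition is_cu_pairing (R : fieldType) (n : nat) (q : R) (A U : falgType R)
    (X t Y : A) (E F K : U) (pair : A -> U -> R) :=
  [/\ (forall (c : R) (x y : A) (u : U), pair (c *: x + y) u = c * pair x u + pair y u),
      (forall (c : R) (x : A) (u v : U), pair x (c *: u + v) = c * pair x u + pair x v) &
      (forall i j k i' j' k' : 'I_n,
         pair (cmon X t Y i j k) (umon F K E i' j' k') =
         (i == i')%:R * (k == k')%:R * q ^+ (j * j') * qfact i q^-1 * qfact k q)].

Definition fourier (R : fieldType) (A U : falgType R) (I : finType)
    (intg : A -> R) (e : I -> A) (f : I -> U) (h : A) : U :=
  \sum_(a : I) intg (e a * h) *: f a.

From HB Require Import structures.
From mathcomp Require Import all_boot all_order all_algebra.
From mathcomp Require Import falgebra.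
From mathcomp Require Import zify ring.
Import Order.TTheory GRing.Theory Num.Theory.
Local Open Scope ring_scope.

Set Implicit Arguments. Unset Strict Implicit.

(* Since f is the dual basis of e, <x, F h> = int x h for every x.  The
   q-commutation relations make X^a t^b Y^c * X^al t^bt Y^ga a power of q times
   X^(a+al) t^(b+bt) Y^(c+ga), so its integral is nonzero exactly when
   (a, b, c) = (n-1-al, 1-bt mod n, n-1-ga): on monomials the bilinear form
   (x, h) |-> int x h has a weighted permutation matrix, which yields an
   explicit inverse of F.  The pairing separates the elements of u_q(sl_2) by
   discrete Fourier inversion in the exponent of t, so F(X^al t^bt Y^ga) and the
   claimed sum are identified by pairing both with all monomials, using
   sum_(l < n) q^(k l) = n [n | k]. *)

Section ScalarFunctional.
Variables (K : fieldType) (V : lmodType K) (f : V -> K).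
Hypothesis f_scalar : scalar f.
Let fL : {scalar V} := HB.pack (f : V -> K^o) (GRing.isLinear.Build K V K^o *%R f f_scalar).

Lemma scalar_fun0 : f 0 = 0. Proof. exact: (raddf0 fL). Qed.
Lemma scalar_funB u v : f (u - v) = f u - f v. Proof. exact: (raddfB fL). Qed.
Lemma scalar_funZ a u : f (a *: u) = a * f u. Proof. exact: (scalarZ fL). Qed.

Lemma scalar_fun_sumZ (J : Type) (r : seq J) (c : J -> K) (v : J -> V) :
  f (\sum_(j <- r) c j *: v j) = \sum_(j <- r) c j * f (v j).
Proof. by rewrite [LHS](raddf_sum fL); apply: eq_bigr => j _; apply: scalar_funZ. Qed.

End ScalarFunctional.

Lemma basis_coords (K : fieldType) (V : vectType K) (J : finType) (m : J -> V) :
  basis_of fullv [seq m j | j <- enum J] -> forall v, exists c : J -> K, v = \sum_j c j *: m j.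
Proof.
move=> /andP[/eqP span_m _] v.
have: v \in (\sum_j <[m j]>)%VS.
  by rewrite -big_enum -(big_map m xpredT) -span_def span_m memvf.
case/memv_sumP=> vs /= vs_line ->.
have [c Dvs] := fin_all_exists (fun j => vlineP _ _ (vs_line j isT)).
by exists c; apply: eq_bigr.
Qed.

Lemma expr_qcommute (K : comPzRingType) (A : algType K) (u v : A) (s : K) :
  u * v = s *: (v * u) -> forall i j, u ^+ i * v ^+ j = s ^+ (i * j) *: (v ^+ j * u ^+ i).
Proof.
move=> uv; have uiv i : u ^+ i * v = s ^+ i *: (v * u ^+ i).
  elim: i => [|i IH]; first by rewrite !expr0 mulr1 mul1r scale1r.
  rewrite exprS -mulrA IH -scalerAr [u * (v * _)]mulrA uv -scalerAl scalerA.
  by rewrite exprS mulrA mulrC.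
move=> i; elim=> [|j IH]; first by rewrite muln0 !expr0 mulr1 mul1r scale1r.
rewrite [v ^+ j.+1]exprSr mulrA IH -scalerAl -[_ * u ^+ i * v]mulrA uiv -scalerAr scalerA.
by rewrite -exprD mulnS addnC mulrA -exprSr.
Qed.

Lemma qfact_neq0 (K : fieldType) (z : K) i :
  (forall k, (0 < k <= i)%N -> z ^+ k != 1) -> qfact i z != 0.
Proof.
move=> zk_neq1; rewrite prodf_seq_neq0; apply/allP => k.
rewrite mem_index_iota => /andP[k_gt0 k_le].
rewrite /qint mulf_neq0 ?invr_neq0 // subr_eq0 eq_sym ?zk_neq1 ?k_gt0 //.
by rewrite -[z]expr1 zk_neq1 // (leq_trans k_gt0 k_le).
Qed.

Section PrimitiveRoot.
Variables (R : fieldType) (n : nat) (q : R).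
Hypothesis q_prim : n.-primitive_root q.

Lemma prim_root_neq0 : q != 0.
Proof. by rewrite (prim_root_eq0 q_prim) -lt0n (prim_order_gt0 q_prim). Qed.

Lemma expfz_prim_root_eq (z1 z2 k : int) : z1 = z2 + k * n%:Z -> q ^ z1 = q ^ z2.
Proof.
move=> ->; rewrite expfzDr ?prim_root_neq0 // [k * _]mulrC -exprz_exp -exprnP.
by rewrite (prim_expr_order q_prim) exp1rz mulr1.
Qed.

Lemma sum_expr_prim_root k :
  \sum_(l < n) (q ^+ k) ^+ l = if (n %| k)%N then n%:R else 0.
Proof.
case: ifP => [n_dvd_k | n_ndvd_k].
  rewrite (_ : q ^+ k = 1); last by apply/eqP; rewrite -(prim_order_dvd q_prim).
  by under eq_bigr do rewrite expr1n; rewrite sumr_const card_ord.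
have qk_neq1 : q ^+ k - 1 != 0 by rewrite subr_eq0 -(prim_order_dvd q_prim) n_ndvd_k.
have := subrX1 (q ^+ k) n.
rewrite exprAC (prim_expr_order q_prim) expr1n subrr => /esym/eqP.
by rewrite mulf_eq0 (negbTE qk_neq1) => /eqP.
Qed.

Lemma sum_expr_prim_root_ord (i k : 'I_n) :
  \sum_(l < n) (q ^+ (i + (n - k))) ^+ l = (i == k)%:R * n%:R.
Proof.
rewrite sum_expr_prim_root; case: (eqVneq i k) => [<- | ik].
  by rewrite subnKC ?dvdnn ?mul1r // ltnW.
suff -> : (n %| i + (n - k))%N = false by rewrite mul0r.
apply: contraNF ik => /dvdnP[m Dm]; apply/eqP/val_inj => /=.
have := ltn_ord i; have := ltn_ord k; case: m Dm => [|[|m]]; nia.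
Qed.

Lemma qfact_prim_root_neq0 i : (i < n)%N -> qfact i q != 0.
Proof.
by move=> i_lt; apply: qfact_neq0 => k k_i; rewrite -(prim_order_dvd q_prim) gtnNdvd //; lia.
Qed.

Lemma qfact_prim_root_inv_neq0 i : (i < n)%N -> qfact i q^-1 != 0.
Proof.
move=> i_lt; apply: qfact_neq0 => k k_i.
by rewrite exprVn invr_eq1 -(prim_order_dvd q_prim) gtnNdvd //; lia.
Qed.

Lemma sum_fourier_coef (a b c d : nat) :
  \sum_(l < n) q ^ (- ((l + a)%:Z * (1 - b%:Z)) + b%:Z * c%:Z) * q ^+ (d * l) / n%:R =
  if (n %| d + b + n.-1)%N then q ^+ (c * b) / q ^+ (a * d) else 0.
Proof.
have q_neq0 := prim_root_neq0; have n_gt0 := prim_order_gt0 q_prim.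
have termE (l : 'I_n) : q ^ (- ((l + a)%:Z * (1 - b%:Z)) + b%:Z * c%:Z) * q ^+ (d * l) =
    q ^ (- (a%:Z * (1 - b%:Z)) + b%:Z * c%:Z) * (q ^+ (d + b + n.-1)) ^+ l.
  rewrite -exprM !exprnP -!expfzDr //.
  by apply: (expfz_prim_root_eq (k := - l%:Z)); nia.
under eq_bigr do rewrite termE mulrAC.
rewrite -mulr_sumr sum_expr_prim_root; case: ifP => [/dvdnP[k Dk] | _]; last by rewrite mulr0.
rewrite divfK ?(prim_root_natf_neq0 q_prim) // !exprnP invr_expz -expfzDr //.
by apply: (expfz_prim_root_eq (k := a%:Z * (k%:Z - 1))); nia.
Qed.

End PrimitiveRoot.

Lemma eq_rev_ord n (a b : 'I_n) : (a == rev_ord b) = (a + b == n.-1)%N.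
Proof. by rewrite -val_eqE /=; apply/eqP/eqP; have := ltn_ord b; lia. Qed.

Lemma dvdn_add_pred n m : (1 < n)%N -> (n %| m + n.-1)%N = (m %% n == 1)%N.
Proof.
move=> n_gt1; case: m => [|m]; first by rewrite add0n mod0n gtnNdvd //; lia.
rewrite -(modn_small n_gt1) eqn_mod_dvd // subn1 /= (_ : m.+1 + n.-1 = m + n)%N; last by lia.
by rewrite dvdn_addl.
Qed.

Section DualIndex.
Variable n : nat.
Hypothesis n_gt1 : (1 < n)%N.

Definition idx_dual (x : idx n) : idx n :=
  (rev_ord x.1.1, Ordinal (ltn_pmod (n.+1 - x.1.2) (ltnW n_gt1)), rev_ord x.2).

Lemma idx_dualE x y : (x == idx_dual y) =
  [&& x.1.1 == rev_ord y.1.1, (n %| x.1.2 + y.1.2 + n.-1)%N & x.2 == rev_ord y.2].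
Proof.
case: x y => [[a b] c] [[a' b'] c']; rewrite !xpair_eqE /= -andbA dvdn_add_pred //.
congr [&& _, _ & _]; rewrite -val_eqE /= -[nat_of_ord b in LHS](modn_small (ltn_ord b)).
rewrite -(eqn_modDr b') subnK; last by have := ltn_ord b'; lia.
by rewrite -[n.+1]add1n modnDr (modn_small n_gt1).
Qed.

Lemma idx_dual_sym x y : (x == idx_dual y) = (y == idx_dual x).
Proof.
by rewrite !idx_dualE !eq_rev_ord (addnC x.1.1) (addnC x.1.2) (addnC x.2).
Qed.

Lemma idx_dualK : involutive idx_dual.
Proof. by move=> x; apply/eqP; rewrite eq_sym idx_dual_sym. Qed.

End DualIndex.

Section CqMonomials.
Variables (R : fieldType) (n : nat) (q : R) (A : falgType R) (X t Y : A).
Hypotheses (q_neq0 : q != 0) (hA : cq_rels n q X t Y).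

Lemma cmonM a b c a' b' c' :
  cmon X t Y a b c * cmon X t Y a' b' c' =
  (q ^+ (c * b') / q ^+ (a' * b)) *: cmon X t Y (a + a') (b + b') (c + c').
Proof.
have [[_ _ _ YX] [Xt Yt]] := hA.
have YcXa : Y ^+ c * X ^+ a' = X ^+ a' * Y ^+ c.
  have YX1 : Y * X = 1 *: (X * Y) by rewrite scale1r.
  by rewrite (expr_qcommute YX1) expr1n scale1r.
have tbXa : t ^+ b * X ^+ a' = (q ^+ (a' * b))^-1 *: (X ^+ a' * t ^+ b).
  by rewrite (expr_qcommute Xt) scalerA mulVf ?scale1r // expf_neq0.
rewrite /cmon !mulrA -[X ^+ a * t ^+ b * Y ^+ c * X ^+ a']mulrA YcXa.
rewrite !mulrA -[X ^+ a * t ^+ b * X ^+ a']mulrA tbXa.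
rewrite -[X ^+ a * _ * Y ^+ c * t ^+ b']mulrA (expr_qcommute Yt).
by rewrite -!scalerAr -!scalerAl scalerA mulrC !exprD !mulrA.
Qed.

Variable intg : A -> R.
Hypothesis hint : is_cq_integral n X t Y intg.

Lemma intg_cmonM (a b c a' b' c' : 'I_n) :
  intg (cmon X t Y a b c * cmon X t Y a' b' c') =
  if [&& a + a' == n.-1, (b + b') %% n == 1 & c + c' == n.-1]%N
  then q ^+ (c * b') / q ^+ (a' * b) else 0.
Proof.
have [[Xn Yn tn _] _] := hA; have [intg_lin intg_cmon] := hint.
have n_gt0 : (0 < n)%N by apply: leq_ltn_trans (ltn_ord a).
rewrite cmonM (scalar_funZ intg_lin).
have [Xa | a_big] := ltnP (a + a') n; last first.
  rewrite /cmon -(subnKC a_big) [X ^+ (n + _)]exprD Xn !mul0r (scalar_fun0 intg_lin) mulr0.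
  by case: ifP => // /and3P[/eqP]; lia.
have [Yc | c_big] := ltnP (c + c') n; last first.
  rewrite /cmon -(subnKC c_big) [Y ^+ (n + _)]exprD Yn mul0r !mulr0 (scalar_fun0 intg_lin) mulr0.
  by case: ifP => // /and3P[_ _ /eqP]; lia.
rewrite /cmon -(expr_mod _ tn).
rewrite (intg_cmon (Ordinal Xa) (Ordinal (ltn_pmod (b + b') n_gt0)) (Ordinal Yc)) /=.
by case: ifP; rewrite ?mulr1 ?mulr0.
Qed.

End CqMonomials.

Section FourierTransform.
Variables (R : fieldType) (n : nat) (q : R).
Hypotheses (n_gt1 : (1 < n)%N) (q_prim : n.-primitive_root q).
Variables (A : falgType R) (X t Y : A) (intg : A -> R).
Hypotheses (hA : cq_rels n q X t Y) (bA : cq_pbw n X t Y) (hint : is_cq_integral n X t Y intg).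
Variables (U : falgType R) (E F K : U) (pair : A -> U -> R).
Hypotheses (bU : uq_pbw n E F K) (hpair : is_cu_pairing n q X t Y E F K pair).
Variables (I : finType) (e : I -> A) (f : I -> U).
Hypotheses (be : basis_of fullv [seq e a | a <- enum I])
  (hdual : forall a b : I, pair (e b) (f a) = (a == b)%:R).

Let cm (x : idx n) := cmon X t Y x.1.1 x.1.2 x.2.
Let um (x : idx n) := umon F K E x.1.1 x.1.2 x.2.
Let dual := idx_dual n_gt1.
Let mul_coef (x y : idx n) := q ^+ (x.2 * y.1.2) / q ^+ (y.1.1 * x.1.2).

Let intg_scalar : scalar intg. Proof. by case: hint. Qed.
Let pair_scalarl u : scalar (pair ^~ u). Proof. by case: hpair => pl _ _ c x y; apply: pl. Qed.
Let pair_scalarr x : scalar (pair x). Proof. by case: hpair => _ pr _ c u v; apply: pr. Qed.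
Let pair_cmon_umon (i j k i' j' k' : 'I_n) :
  pair (cmon X t Y i j k) (umon F K E i' j' k') =
  (i == i')%:R * (k == k')%:R * q ^+ (j * j') * qfact i q^-1 * qfact k q.
Proof. by case: hpair. Qed.

Lemma intg_cm_mul x y : intg (cm x * cm y) = if x == dual y then mul_coef x y else 0.
Proof.
rewrite (intg_cmonM (prim_root_neq0 q_prim) hA hint) -!eq_rev_ord.
by rewrite -dvdn_add_pred // -idx_dualE.
Qed.

Lemma mul_coef_neq0 x y : mul_coef x y != 0.
Proof. by rewrite mulf_neq0 ?invr_neq0 ?expf_neq0 ?(prim_root_neq0 q_prim). Qed.

Lemma pair_fourier x h : pair x (fourier intg e f h) = intg (x * h).
Proof.
have [c ->] := basis_coords be x.
rewrite (scalar_fun_sumZ (pair_scalarl _)) mulr_suml.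
under [in RHS]eq_bigr do rewrite -scalerAl.
rewrite (scalar_fun_sumZ intg_scalar); apply: eq_bigr => b _; congr (_ * _).
rewrite /fourier (scalar_fun_sumZ (pair_scalarr _)).
under eq_bigr do rewrite hdual.
by rewrite (bigD1 b) //= eqxx mulr1 big1 ?addr0 // => a /negbTE->; rewrite mulr0.
Qed.

Lemma pair_cm_inj u v : (forall x, pair (cm x) u = pair (cm x) v) -> u = v.
Proof.
move=> puv; apply/eqP; rewrite -subr_eq0; apply/eqP.
have : forall x, pair (cm x) (u - v) = 0.
  by move=> x; rewrite (scalar_funB (pair_scalarr _)) puv subrr.
have [d ->] := basis_coords (m := um) bU (u - v).
move=> pd0; apply: big1 => [[[a m] c]] _.
have dft y : \sum_(j < n) q ^+ (j * (n - m)) * (d y * pair (cm (a, j, c)) (um y)) =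
    d y * (a == y.1.1)%:R * (c == y.2)%:R * qfact a q^-1 * qfact c q * ((y.1.2 == m)%:R * n%:R).
  rewrite -(sum_expr_prim_root_ord q_prim) mulr_sumr; apply: eq_bigr => j _.
  by rewrite pair_cmon_umon -exprM mulnDl exprD !(mulnC _ j); ring.
have : \sum_(j < n) q ^+ (j * (n - m)) * pair (cm (a, j, c)) (\sum_y d y *: um y) = 0.
  by apply: big1 => j _; rewrite pd0 mulr0.
under eq_bigr do rewrite (scalar_fun_sumZ (pair_scalarr _)) mulr_sumr.
rewrite exchange_big (bigD1 (a, m, c)) //= [X in _ + X]big1 => [|[[a' m'] c'] ne_y]; last first.
  rewrite dft /=; case: (eqVneq a a') ne_y => [<- | _]; last by rewrite !mulr0 !mul0r.
  case: (eqVneq c c') => [<- | _]; last by rewrite !mulr0 !mul0r.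
  by rewrite !xpair_eqE !eqxx andbT /= => /negbTE->; rewrite mul0r mulr0.
rewrite addr0 dft !eqxx !mulr1 mul1r => /eqP.
rewrite !mulf_eq0 (negbTE (prim_root_natf_neq0 q_prim)).
rewrite (negbTE (qfact_prim_root_neq0 q_prim (ltn_ord c))).
by rewrite (negbTE (qfact_prim_root_inv_neq0 q_prim (ltn_ord a))) !orbF => /eqP->; rewrite scale0r.
Qed.

Definition fourier_inv (u : U) : A :=
  \sum_y ((mul_coef (dual y) y)^-1 * pair (cm (dual y)) u) *: cm y.

Lemma fourierK : cancel (fourier intg e f) fourier_inv.
Proof.
move=> h; have [d ->] := basis_coords (m := cm) bA h.
rewrite /fourier_inv; apply: eq_bigr => y _; congr (_ *: _).
rewrite pair_fourier mulr_sumr.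
under eq_bigr do rewrite -scalerAr.
rewrite (scalar_fun_sumZ intg_scalar).
under eq_bigr do rewrite intg_cm_mul (inj_eq (can_inj (idx_dualK n_gt1))) eq_sym
  (fun_if (fun r => d _ * r)) mulr0.
by rewrite -big_mkcond big_pred1_eq mulrCA mulVf ?mulr1 // mul_coef_neq0.
Qed.

Lemma fourier_invK : cancel fourier_inv (fourier intg e f).
Proof.
move=> u; apply: pair_cm_inj => x.
rewrite pair_fourier /fourier_inv mulr_sumr.
under eq_bigr do rewrite -scalerAr.
rewrite (scalar_fun_sumZ intg_scalar).
under eq_bigr do rewrite intg_cm_mul idx_dual_sym (fun_if (fun r => _ * r)) mulr0.
by rewrite -big_mkcond big_pred1_eq /dual idx_dualK mulrAC mulVf ?mul1r // mul_coef_neq0.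
Qed.

Lemma pair_cm_fourier_formula x (al bt ga : 'I_n) :
  pair (cm x) (\sum_(l < n)
        (q ^ (- ((l + al)%:Z * (1 - bt%:Z)) + bt%:Z * (n.-1 - ga)%:Z)
         / (n%:R * qfact (n.-1 - al) q^-1 * qfact (n.-1 - ga) q))
        *: umon F K E (n.-1 - al) l (n.-1 - ga)) =
  if x == dual (al, bt, ga) then mul_coef x (al, bt, ga) else 0.
Proof.
have revE (i : 'I_n) : (n.-1 - i)%N = rev_ord i :> nat by rewrite /= subnS predn_sub.
case: x => [[a b] c]; rewrite idx_dualE /= !revE (scalar_fun_sumZ (pair_scalarr _)).
(* Generalized so that the simplifications below cannot unfold [rev_ord]. *)
move: (rev_ord al) (rev_ord ga) => a' c'.
under eq_bigr do rewrite pair_cmon_umon /=.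
case: (eqVneq a a') => [-> | _]; last by rewrite big1 // => l _; rewrite !mul0r mulr0.
case: (eqVneq c c') => [-> | _]; last by rewrite andbF big1 // => l _; rewrite mulr0 !mul0r mulr0.
rewrite andbT -(sum_fourier_coef q_prim); apply: eq_bigr => l _ /=; field.
rewrite (prim_root_natf_neq0 q_prim) (qfact_prim_root_neq0 q_prim) //.
by rewrite (qfact_prim_root_inv_neq0 q_prim).
Qed.

Lemma fourier_bijective : bijective (fourier intg e f).
Proof. exact: Bijective fourierK fourier_invK. Qed.

Lemma fourier_cmon (al bt ga : 'I_n) :
  fourier intg e f (cmon X t Y al bt ga) =
  \sum_(l < n)
     (q ^ (- ((l + al)%:Z * (1 - bt%:Z)) + bt%:Z * (n.-1 - ga)%:Z)
      / (n%:R * qfact (n.-1 - al) q^-1 * qfact (n.-1 - ga) q))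
     *: umon F K E (n.-1 - al) l (n.-1 - ga).
Proof.
apply: pair_cm_inj => x.
by rewrite pair_fourier pair_cm_fourier_formula; apply: (intg_cm_mul x (al, bt, ga)).
Qed.

End FourierTransform.

Unset Implicit Arguments. Set Strict Implicit.

Theorem proposition5p2 (R : fieldType) (n : nat) (q : R)
  (n_gt1 : (1 < n)%N) (q_prim : n.-primitive_root q)
  (A : falgType R) (X t Y : A) (hA : cq_rels n q X t Y) (bA : cq_pbw n X t Y)
  (U : falgType R) (E F K : U) (hU : uq_rels n q E F K) (bU : uq_pbw n E F K)
  (intg : A -> R) (hint : is_cq_integral n X t Y intg)
  (pair : A -> U -> R) (hpair : is_cu_pairing n q X t Y E F K pair)
  (I : finType) (e : I -> A) (f : I -> U)
  (be : basis_of fullv [seq e a | a <- enum I])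
  (hdual : forall a b : I, pair (e b) (f a) = (a == b)%:R) :
  bijective (fourier intg e f) /\
  (forall al bt ga : 'I_n,
     fourier intg e f (cmon X t Y al bt ga) =
     \sum_(l < n)
        (q ^ (- ((l + al)%:Z * (1 - bt%:Z)) + bt%:Z * (n.-1 - ga)%:Z)
         / (n%:R * qfact (n.-1 - al) q^-1 * qfact (n.-1 - ga) q))
        *: umon F K E (n.-1 - al) l (n.-1 - ga)).
Proof.
split; first exact: (fourier_bijective n_gt1 q_prim hA bA hint bU hpair be hdual).
exact: (fourier_cmon n_gt1 q_prim hA hint bU hpair be hdual).
Qed.
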